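(* Let $m,k$ be natural numbers. If the hereditary representation in base $k+1$ of the $k$-th term $G(k,m)$ of the Goodstein sequence $G(m)$ contains more than one non-zero term, then $G(k+1,m)\ge G(k,m)$.
   Context: For a natural number base $b>1$, the hereditary representation $m\langle b\rangle$ of $m$ is $\sum_{i=0}^{l} a_i b^{i}$ with $0\le a_i<b$, $a_l\ne0$, each exponent itself written in hereditary representation in base $b$, recursively; its terms are the summands $a_i b^i$, and it contains more than one non-zero term if $a_i\neq0$ for at least two indices $i$. $m\langle b\rangle''$ is obtained by syntactically replacing every $b$ by $b+1$ in $m\langle b\rangle$. The Goodstein sequence $G(m)=\{m, m''-1, (m''-1)''-1,\dots\}$ starts from $m$ in base $2$; its $n$-th term is $G(n,m)$, with $G(1,m)=m$ in base $2$, $G(k,m)$ written in base $k+1$, and $G(k+1,m)=G(k,m)\langle k+1\rangle''-1$. *)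

From mathcomp Require Import all_boot.
Set Implicit Arguments. Unset Strict Implicit. Unset Printing Implicit Defensive.

Definition digit (b m i : nat) : nat := (m %/ b ^ i) %% b.

(* For b > 1 every digit of index i >= m.+1 is zero (b^i > m), so
   m = \sum_(i < m.+1) digit b m i * b ^ i.  The function below computes the
   value of m<b>'' : the hereditary base-b representation of m with every b
   syntactically replaced by b+1.  The fuel m.+1 suffices since a nonzero
   digit a_i has i < b^i <= m, so exponents are evaluated with enough fuel. *)
Fixpoint bump_aux (fuel b m : nat) {struct fuel} : nat :=
  match fuel with
  | 0 => 0
  | f.+1 => \sum_(i < m.+1)
      (if digit b m i == 0 then 0 else digit b m i * b.+1 ^ (bump_aux f b i))
  end.

Definition bump (b m : nat) : nat := bump_aux m.+1 b m.

(* Goodstein sequence: G 1 m = m (written in base 2); G k m is written in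
   base k+1 and G (k+1) m = G(k,m)<k+1>'' - 1 (truncated subtraction, the
   sequence being stationary at 0 once it reaches 0).  G 0 m is not part of
   the sequence; it is set to m for definiteness and never used. *)
Fixpoint G (k m : nat) : nat :=
  match k with
  | 0 => m
  | 0.+1 => m
  | (k'.+1 as k).+1 => bump k.+1 (G k m) - 1
  end.

(* The hereditary representation of m in base b contains more than one
   non-zero term: two distinct indices with nonzero (top-level) digits. *)
Definition many_terms (b m : nat) : Prop :=
  exists i j, i <> j /\ digit b m i != 0 /\ digit b m j != 0.

From Pilot Require Import Defs.
From mathcomp Require Import all_boot.
From mathcomp Require Import zify.

(* Write n = \sum a_i b^i.  The bump replaces each b^i by (b+1)^(i<b>''), and
   i<b>'' >= i by induction, so no term decreases; a term with i > 0 strictly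
   increases since b^i < (b+1)^i.  If n has two nonzero digits, one of them
   sits at an index i > 0, so n<b>'' > n and hence n<b>'' - 1 >= n. *)

Lemma digit_expansion_rem b m N : 1 < b ->
  \sum_(i < N) digit b m i * b ^ i + b ^ N * (m %/ b ^ N) = m.
Proof.
move=> b_gt1; elim: N => [|N IH]; first by rewrite big_ord0 expn0 divn1 mul1n.
rewrite big_ord_recr /= expnS (mulnC b) divnMA /digit.
move: IH; set S := \sum_(i < N) _; set q := m %/ b ^ N; set P := b ^ N => IH.
have Eq := divn_eq q b; move: Eq IH; set x := q %/ b; set y := q %% b => Eq.
by rewrite Eq; nia.
Qed.

Lemma digit_expansion b m : 1 < b -> \sum_(i < m.+1) digit b m i * b ^ i = m.
Proof.
move=> b_gt1; have m_lt : m < b ^ m.+1.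
  by apply: leq_trans (ltn_expl m b_gt1) _; rewrite leq_exp2l.
by have := digit_expansion_rem b m m.+1 b_gt1; rewrite divn_small // muln0 addn0.
Qed.

Lemma digit_neq0_lt b m i : 1 < b -> digit b m i != 0 -> i < m.
Proof.
move=> b_gt1 di; rewrite ltnNge; apply: contra di => m_le_i.
have m_lt : m < b ^ i by apply: leq_ltn_trans m_le_i (ltn_expl i b_gt1).
by rewrite /digit divn_small ?mod0n.
Qed.

Lemma many_terms_digit_pos b n :
  many_terms b n -> exists2 t, 0 < t & digit b n t != 0.
Proof.
move=> [[|i] [[|j] [neq_ij [di dj]]]]; first by case: neq_ij.
- by exists j.+1.
- by exists i.+1.
- by exists i.+1.
Qed.

Lemma leq_bumped_term d b i e : i <= e -> d * b ^ i <= d * b.+1 ^ e.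
Proof.
move=> le_ie; rewrite leq_mul2l; apply/orP; right.
apply: leq_trans (leq_pexp2l _ le_ie) => //.
by case: i {le_ie} => [|i]; rewrite ?expn0 ?leq_exp2r.
Qed.

Lemma ltn_bumped_term d b i e :
  0 < d -> 0 < i -> i <= e -> d * b ^ i < d * b.+1 ^ e.
Proof.
move=> d_gt0 i_gt0 le_ie; rewrite ltn_mul2l d_gt0 /=.
by apply: leq_trans (leq_pexp2l _ le_ie) => //; rewrite ltn_exp2r.
Qed.

Lemma leq_digit_bump b f m i : 1 < b ->
    (forall j, j < m -> j <= bump_aux f b j) ->
  digit b m i * b ^ i <=
    (if digit b m i == 0 then 0 else digit b m i * b.+1 ^ bump_aux f b i).
Proof.
move=> b_gt1 bump_small; case: eqP => [-> // | /eqP di].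
by apply/leq_bumped_term/bump_small/(digit_neq0_lt b _ _ b_gt1).
Qed.

Lemma leq_bump_aux b f m : 1 < b -> m < f -> m <= bump_aux f b m.
Proof.
move=> b_gt1; elim: f m => [//|f IH] m m_lt /=.
rewrite {1}(esym (digit_expansion b m b_gt1)); apply: leq_sum => i _.
by apply: leq_digit_bump => // j j_lt; exact/IH/(leq_trans j_lt).
Qed.

(* [Defs.bump] must be qualified: fintype's [bump] shadows it. *)
Lemma bump_gt_many_terms b n : 1 < b -> many_terms b n -> n < Defs.bump b n.
Proof.
move=> b_gt1 /many_terms_digit_pos [t t_gt0 dt].
have bump_small j : j < n -> j <= bump_aux n b j.
  by move=> j_lt; apply: leq_bump_aux.
have t_lt_n := digit_neq0_lt b n t b_gt1 dt.
have t_lt : t < n.+1 := ltnW t_lt_n.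
pose t' : 'I_n.+1 := Ordinal t_lt.
rewrite /Defs.bump /= {1}(esym (digit_expansion b n b_gt1)).
rewrite (bigD1 t') //= [ltnRHS](bigD1 t') //= -addSn.
apply: leq_add; last by apply: leq_sum => i _; apply: leq_digit_bump.
by rewrite (negbTE dt) ltn_bumped_term ?bump_small // lt0n.
Qed.

Theorem lemma2 (m k : nat) :
  1 <= k -> many_terms k.+1 (G k m) -> G k m <= G k.+1 m.
Proof.
case: k => [//|k] _ many.
have -> : G k.+2 m = Defs.bump k.+2 (G k.+1 m) - 1 by [].
by have := bump_gt_many_terms k.+2 _ (isT : 1 < k.+2) many; lia.
Qed.
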